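(* Let $n$ be a positive integer and $S\subseteq\mathbb{Z}_n$ nonempty with $0\notin S$ and $S=-S$. A subset $C$ of $\mathbb{Z}_n$ is a total perfect code in $\mathrm{Cay}(\mathbb{Z}_n,S)$ if and only if there exists $q(x)\in\mathbb{Z}[x]$ such that $$f_C(x)\, f_{S}(x) = (x^n-1)\,q(x) + (x^{n-1}+\cdots+x+1).$$
   Context: Elements of $\mathbb{Z}_n$ are identified with integers in $\{0,1,\dots,n-1\}$. For a nonempty finite set $A$ of nonnegative integers, $f_A(x)=\sum_{a\in A}x^a$. The circulant graph $\mathrm{Cay}(\mathbb{Z}_n,S)$ has vertex set $\mathbb{Z}_n$ with $u,v$ adjacent iff $v-u\in S$. A total perfect code in a graph $\Gamma=(V,E)$ is a subset $C\subseteq V$ such that every vertex of $V$ has exactly one neighbour in $C$. *)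

(* Z_n is represented by 'I_n (values 0..n-1), arithmetic mod n on nat. *)
From mathcomp Require Import all_boot all_order all_algebra.
Set Implicit Arguments. Unset Strict Implicit. Unset Printing Implicit Defensive.
Import GRing.Theory.
Local Open Scope ring_scope.

Definition subZn (n : nat) (u v : 'I_n) : nat := ((val v + n - val u) %% n)%N.

Definition cay_adj (n : nat) (S : {set 'I_n}) (u v : 'I_n) : bool :=
  [exists s in S, val s == subZn u v].

Definition symmetric_Zn (n : nat) (S : {set 'I_n}) : Prop :=
  forall s, s \in S -> exists2 t, t \in S & val t = ((n - val s) %% n)%N.

Definition total_perfect_code (n : nat) (S C : {set 'I_n}) : Prop :=
  forall u : 'I_n, #|[set c in C | cay_adj S u c]| = 1%N.

Definition fpoly (n : nat) (A : {set 'I_n}) : {poly int} :=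
  \sum_(a in A) 'X^(val a).

(** Writing f_C f_S = sum_{c in C, s in S} x^(c+s) and reducing every exponent
    modulo n changes the product only by a multiple of x^n - 1, and leaves
    the polynomial sum_k N(k) x^k of degree < n, where N(k) counts the pairs
    with c + s = k in Z_n.  Because S = -S, N(k) is the number of c in C with
    c - k in S, i.e. the number of neighbours of k in C.  A polynomial of
    degree < n is determined by its class modulo x^n - 1, so the identity
    holds iff N(k) = 1 for every k, which is total perfectness of C. *)

From mathcomp Require Import all_boot all_order all_algebra.
From mathcomp Require Import zify ring.
Set Implicit Arguments.
Unset Strict Implicit.
Unset Printing Implicit Defensive.
Import GRing.Theory Num.Theory.

Local Open Scope ring_scope.

Section ZnArithmetic.

Variable n : nat.
Implicit Types (u v c s k : 'I_n) (S C : {set 'I_n}).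

Lemma subZn_lt u v : (subZn u v < n)%N.
Proof. by rewrite ltn_pmod // (leq_ltn_trans _ (ltn_ord u)). Qed.

Definition diffZn u v : 'I_n := Ordinal (subZn_lt u v).

Lemma cay_adjE S u v : cay_adj S u v = (diffZn u v \in S).
Proof.
apply/existsP/idP => [[s /andP [sS /eqP sE]] | uvS]; last first.
  by exists (diffZn u v); rewrite uvS eqxx.
by rewrite (_ : diffZn u v = s) //; apply: val_inj.
Qed.

Lemma addZn_eq_diff c s k : (((c + s) %% n)%N == k) = (s == diffZn c k).
Proof.
have addcE : (c + (k + n - c) = k + n)%N by move: (ltn_ord c); lia.
rewrite -val_eqE /= /subZn -[in RHS](modn_small (ltn_ord s)) -(eqn_modDl c).
by rewrite addcE modnDr (modn_small (ltn_ord k)).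
Qed.

Lemma subZn_opp u v : ((n - subZn u v) %% n)%N = subZn v u.
Proof.
have := ltn_ord u; have := ltn_ord v; rewrite /subZn /= => lt_vn lt_un.
have [lt_uv | lt_vu | <-] := ltngtP u v.
- rewrite (_ : (v + n - u = (v - u) + n)%N) ?modnDr; last lia.
  rewrite (modn_small (_ : v - u < n)%N); last lia.
  by congr (_ %% _)%N; lia.
- rewrite (modn_small (_ : v + n - u < n)%N); last lia.
  by rewrite (_ : (u + n - v = (n - (v + n - u)) + n)%N) ?modnDr //; lia.
- by rewrite addKn modnn subn0 modnn.
Qed.

Lemma symmetric_diffZnC S u v :
  symmetric_Zn S -> (diffZn u v \in S) = (diffZn v u \in S).
Proof.
have diffS x y : symmetric_Zn S -> diffZn x y \in S -> diffZn y x \in S.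
  move=> symS /symS [t tS tE].
  by rewrite (_ : diffZn y x = t) //; apply: val_inj; rewrite tE /= subZn_opp.
by move=> symS; apply/idP/idP; apply: diffS.
Qed.

Lemma count_addZn_eq S c k :
  (\sum_(s in S) (((c + s) %% n)%N == k : nat))%N = (diffZn c k \in S).
Proof.
under eq_bigr do rewrite addZn_eq_diff.
rewrite big_mkcond (bigD1 (diffZn c k)) //= eqxx big1 => [|s /negbTE ->].
  by case: (_ \in S); rewrite addn0.
by rewrite if_same.
Qed.

Lemma count_sums_eq_neighbours S C k : symmetric_Zn S ->
  (\sum_(p | (p.1 \in C) && (p.2 \in S)) (((p.1 + p.2) %% n)%N == k : nat))%N
  = #|[set c in C | cay_adj S k c]|.
Proof.
move=> symS.
rewrite -(pair_big (mem C) (mem S) (fun c s => (((c + s) %% n)%N == k : nat))).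
under eq_bigr => c _ do
  rewrite count_addZn_eq (symmetric_diffZnC _ _ symS) -cay_adjE.
rewrite -sum1_card big_mkcond [RHS]big_mkcond /=.
by apply: eq_bigr => c _; rewrite inE; case: (c \in C); case: (cay_adj S k c).
Qed.

End ZnArithmetic.

Section ReductionModXnSub1.

Variable R : nzRingType.
Implicit Types n m : nat.

Definition Xn_quot n m : {poly R} :=
  (\sum_(i < m %/ n) 'X^n ^+ i) * 'X^(m %% n).

Lemma Xn_divn_eq n m : 'X^m = ('X^n - 1) * Xn_quot n m + 'X^(m %% n).
Proof.
rewrite {1}(divn_eq m n) exprD mulnC exprM -[_ ^+ (m %/ n)](subrK 1) subrX1.
by rewrite mulrDl mul1r mulrA.
Qed.

Lemma sum_Xn_divn_eq (I : finType) (P : pred I) (e : I -> nat) n :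
  \sum_(i | P i) ('X^(e i) : {poly R}) =
  ('X^n - 1) * \sum_(i | P i) Xn_quot n (e i) + \sum_(i | P i) 'X^(e i %% n).
Proof.
by rewrite mulr_sumr -big_split; apply: eq_bigr => i _; apply: Xn_divn_eq.
Qed.

Lemma sum_Xn_modnE (I : finType) (P : pred I) (e : I -> nat) n : (0 < n)%N ->
  \sum_(i | P i) 'X^(e i %% n) =
  \poly_(k < n) ((\sum_(i | P i) ((e i %% n)%N == k : nat))%:R : R).
Proof.
move=> n_gt0; apply/polyP => k; rewrite coef_poly coef_sum.
case: ifP => [_ | k_ge_n].
  by rewrite natr_sum; apply: eq_bigr => i _; rewrite coefXn eq_sym.
apply: big1 => i _; rewrite coefXn; case: eqP => // ekE.
by rewrite ekE ltn_pmod in k_ge_n.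
Qed.

End ReductionModXnSub1.

Lemma Xn_sub1_rem_uniq (R : idomainType) n (q1 q2 r1 r2 : {poly R}) :
  (0 < n)%N -> (size r1 <= n)%N -> (size r2 <= n)%N ->
  ('X^n - 1) * q1 + r1 = ('X^n - 1) * q2 + r2 -> r1 = r2.
Proof.
move=> n_gt0 r1_small r2_small eq12.
have sizeA : size ('X^n - 1 : {poly R}) = n.+1 by rewrite -polyC1 size_XnsubC.
have dE : ('X^n - 1) * (q1 - q2) = r2 - r1.
  by rewrite -[r2](addKr (('X^n - 1) * q2)) -eq12; ring.
have d_small : (size (('X^n - 1) * (q1 - q2))%R <= n)%N.
  rewrite dE (leq_trans (size_polyD _ _)) // size_polyN geq_max.
  by rewrite r1_small r2_small.
have q12 : q1 - q2 = 0.
  apply: contraTeq d_small => d_neq0.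
  rewrite -ltnNge size_mul // -?size_poly_eq0 ?sizeA //=.
  by rewrite -addn1 leq_add2l size_poly_gt0.
by move/eqP: dE; rewrite q12 mulr0 eq_sym subr_eq0 => /eqP.
Qed.

Lemma fpoly_mul (n : nat) (C S : {set 'I_n}) :
  fpoly C * fpoly S = \sum_(p | (p.1 \in C) && (p.2 \in S)) 'X^(p.1 + p.2).
Proof.
rewrite /fpoly big_distrlr pair_big /=.
by apply: eq_bigr => p _; rewrite exprD.
Qed.

Lemma fpoly_mul_rem (n : nat) (S C : {set 'I_n}) : (0 < n)%N ->
  exists Q : {poly int}, fpoly C * fpoly S = ('X^n - 1) * Q +
    \poly_(k < n) (\sum_(p | (p.1 \in C) && (p.2 \in S))
                     (((p.1 + p.2) %% n)%N == k : nat))%:R.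
Proof.
move=> n_gt0.
by rewrite fpoly_mul (sum_Xn_divn_eq _ _ _ n) sum_Xn_modnE //; eexists.
Qed.

Theorem lemma2p4 (n : nat) (S C : {set 'I_n}) :
  (0 < n)%N -> S != set0 -> (forall s, s \in S -> val s <> 0%N) ->
  symmetric_Zn S ->
  (total_perfect_code S C <->
   exists q : {poly int},
     fpoly C * fpoly S = ('X^n - 1) * q + \sum_(i < n) 'X^i).
Proof.
move=> n_gt0 _ _ symS.
have [Q fCSE] := fpoly_mul_rem S C n_gt0.
have onesE : \sum_(i < n) 'X^i = \poly_(i < n) 1 :> {poly int}.
  by rewrite poly_def; apply: eq_bigr => i _; rewrite scale1r.
rewrite onesE; split => [tpcC | [q fCSE'] u].
  exists Q; rewrite fCSE; congr (_ + _); apply: eq_poly => k lt_kn.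
  by rewrite (count_sums_eq_neighbours C (Ordinal lt_kn) symS) tpcC.
have := etrans (esym fCSE) fCSE'.
move=> /(Xn_sub1_rem_uniq n_gt0 (size_poly _ _) (size_poly _ _)).
move=> /(congr1 (coefp u)); rewrite /= !coef_poly ltn_ord.
by rewrite count_sums_eq_neighbours // => /eqP; rewrite pnatr_eq1 => /eqP.
Qed.
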